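(* Let $p\geqslant 3$ be a prime and let $g\geqslant 2$ be an integer. (1) Neither the dihedral group $\mathbb{D}_{p^2}$ of order $2p^2$ nor the group $\mathbb{Z}_p^2\rtimes\mathbb{Z}_2=\langle a,b,c\mid a^p=b^p=c^2=1,\ cac=a^{-1},\ cbc=b^{-1},\ [a,b]=1\rangle$ acts triangularly on a compact Riemann surface of genus $g$. (2) If $\mathbb{Z}_{2p}\times\mathbb{Z}_p$ acts triangularly on a compact Riemann surface of genus $g$, then the signature of the action is $(2p,2p,p)$. (3) If $\mathbb{D}_p\times\mathbb{Z}_p$ acts triangularly on a compact Riemann surface of genus $g$, then the signature of the action is $(2p,2p,p)$ or $(2,p,2p)$. (4) If the cyclic group $\mathbb{Z}_{2p^2}$ acts triangularly on a compact Riemann surface of genus $g$, then the signature of the action is one of $(2,p^2,2p^2)$, $(2p^2,2p^2,p)$, $(2p^2,2p^2,p^2)$, $(2p,p^2,2p^2)$.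
   Context: All groups act faithfully by conformal automorphisms on compact Riemann surfaces. $\mathbb{Z}_n$ denotes the cyclic group of order $n$ and $\mathbb{D}_n$ the dihedral group of order $2n$. A finite group $G$ acting on a compact Riemann surface $S$ acts with signature $(h;m_1,\dots,m_r)$ if $S/G$ has genus $h$ and the branched regular covering $S\to S/G$ ramifies over exactly $r$ points, the points in the fibre over the $i$-th of which have $G$-stabiliser of order $m_i\ge 2$. The action is called triangular if $h=0$ and $r=3$; the signature is then written $(m_1,m_2,m_3)$ (up to the order of the $m_i$). Equivalently, $G$ acts with signature $(m_1,m_2,m_3)$ iff there is a surface-kernel epimorphism (ske) $\Phi:\Gamma\to G$, i.e. an epimorphism injective on each finite cyclic subgroup, from the triangle group $\Gamma=\langle x_1,x_2,x_3\mid x_1x_2x_3=x_1^{m_1}=x_2^{m_2}=x_3^{m_3}=1\rangle$, with $S\cong\mathbb{H}/\ker\Phi$. *)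

From mathcomp Require Import all_boot all_order all_algebra all_fingroup all_solvable.
Set Implicit Arguments. Unset Strict Implicit. Unset Printing Implicit Defensive.
Import GRing.Theory Num.Theory.

(* A finite group G acts with signature (0; m1, m2, m3) on a compact Riemann
   surface of genus g iff there is a surface-kernel epimorphism from the
   triangle group <x1,x2,x3 | x1 x2 x3 = x_i^{m_i} = 1> onto G, the genus
   being given by Riemann-Hurwitz.  A homomorphism from the triangle group is
   the same as a triple (y1,y2,y3) of G with y_i^{m_i} = 1 and y1 y2 y3 = 1;
   it is onto iff the y_i generate G; it is injective on finite cyclic
   subgroups (all conjugate into some <x_i>) iff #[y_i] = m_i. *)
Definition triangular_sig (gT : finGroupType) (G : {group gT}) (g m1 m2 m3 : nat) : Prop :=
  [/\ 2 <= m1, 2 <= m2 & 2 <= m3] /\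
  exists y1 y2 y3 : gT,
    [/\ [/\ y1 \in G, y2 \in G & y3 \in G],
        <<[set y1; y2; y3]>>%g = G :> {set gT},
        (y1 * y2 * y3 = 1)%g &
        [/\ #[y1]%g = m1, #[y2]%g = m2, #[y3]%g = m3 &
        ((2 * g)%:R - 2 = #|G|%:R * (1 - m1%:R^-1 - m2%:R^-1 - m3%:R^-1) :> rat)%R]].

Definition acts_triangularly (gT : finGroupType) (G : {group gT}) (g : nat) : Prop :=
  exists m1 m2 m3, triangular_sig G g m1 m2 m3.

From mathcomp Require Import all_boot all_order all_algebra all_fingroup all_solvable.
From mathcomp Require Import zify ring lra.
Set Implicit Arguments. Unset Strict Implicit. Unset Printing Implicit Defensive.
Import GRing.Theory Num.Theory.

(* Each group G in the statement has a morphism f onto a group of order 2 whose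
   kernel has odd exponent q.  The images under f of a generating triple
   (y1, y2, y3) with y1 y2 y3 = 1 generate f @* G, so exactly two of them are
   nontrivial, i.e. exactly one period #[y_i] is odd.
   (1) Every element outside 'ker f is an involution, so two periods equal 2
       and Riemann-Hurwitz forces g <= 1.
   (2), (3) All periods divide 2p.  A period prime to p kills the image of y_i
       in the quotient Z_p x Z_p, resp. Z_p, which is then generated by a
       single element, resp. by none: so no period is 2 in (2) and at most one
       is in (3).
   (4) Any two of the y_i generate the cyclic group, so no two periods divide 2p.
   An enumeration of the divisors of 2p, resp. 2p^2, concludes. *)

Section DoubledPrimePowers.

Variable p : nat.
Hypotheses (p_pr : prime p) (odd_p : odd p).

Lemma dvdn_double_pfactor k d :
  d %| 2 * p ^ k -> exists2 i, i <= k & d = p ^ i \/ d = 2 * p ^ i.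
Proof.
move=> dvd_d; case odd_d : (odd d).
  have co : coprime d 2 by rewrite coprimen2 odd_d.
  have : d %| p ^ k by rewrite -(Gauss_dvdl _ co) mulnC.
  by case/(dvdn_pfactor _ _ p_pr) => i le_ik ->; exists i; first by []; left.
have /dvdnP[e dE] : 2 %| d by rewrite dvdn2 odd_d.
move: dvd_d; rewrite dE mulnC dvdn_pmul2l // => /(dvdn_pfactor _ _ p_pr)[i le_ik ->].
by exists i; last by right; rewrite mulnC.
Qed.

Lemma dvdn_2p_cases d : 2 <= d -> d %| 2 * p -> [\/ d = 2, d = p | d = 2 * p].
Proof.
rewrite -[p in 2 * p]expn1 => d2 /dvdn_double_pfactor[[|[|i]] // _ [] dE];
  rewrite dE ?expn0 ?expn1 ?muln1 in d2 *;
  by [constructor 1 | constructor 2 | constructor 3 | exfalso; lia].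
Qed.

Lemma dvdn_2p2_cases d : 2 <= d -> d %| 2 * p ^ 2 ->
  d = 2 \/ d = p \/ d = 2 * p \/ d = p ^ 2 \/ d = 2 * p ^ 2.
Proof.
move=> d2 /dvdn_double_pfactor[[|[|[|i]]] // _ [] dE];
  rewrite dE ?expn0 ?expn1 ?muln1 in d2 *; by [tauto | exfalso; lia].
Qed.

Lemma periods_dvdn_2p m1 m2 m3 :
    2 <= m1 -> 2 <= m2 -> 2 <= m3 -> m1 %| 2 * p -> m2 %| 2 * p -> m3 %| 2 * p ->
    odd m1 + odd m2 + odd m3 = 1 ->
    ~~ ((m1 == 2) && (m2 == 2)) -> ~~ ((m2 == 2) && (m3 == 2)) ->
    ~~ ((m3 == 2) && (m1 == 2)) ->
  perm_eq [:: m1; m2; m3] [:: 2 * p; 2 * p; p] \/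
  perm_eq [:: m1; m2; m3] [:: 2; p; 2 * p].
Proof.
have p3 : 2 < p := odd_prime_gt2 odd_p p_pr.
have [p2 p22] : p == 2 = false /\ 2 * p == 2 = false by split; apply/eqP; lia.
move=> + + + /dvdn_2p_cases h1 /dvdn_2p_cases h2 /dvdn_2p_cases h3.
move=> /h1[] -> /h2[] -> /h3[] ->; rewrite ?p2 ?p22 ?oddM ?odd_p //= => ? ? ? ? //;
  by constructor; apply/seq.permP => P /=; ring.
Qed.

Lemma periods_dvdn_2p_ne2 m1 m2 m3 :
    2 <= m1 -> 2 <= m2 -> 2 <= m3 -> m1 %| 2 * p -> m2 %| 2 * p -> m3 %| 2 * p ->
    odd m1 + odd m2 + odd m3 = 1 -> m1 != 2 -> m2 != 2 -> m3 != 2 ->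
  perm_eq [:: m1; m2; m3] [:: 2 * p; 2 * p; p].
Proof.
move=> h1 h2 h3 d1 d2 d3 o1 /negbTE n1 /negbTE n2 /negbTE n3.
have [] // := periods_dvdn_2p h1 h2 h3 d1 d2 d3 o1; rewrite ?n1 ?n2 ?n3 //.
by move/perm_mem/(_ 2); rewrite !inE !(eq_sym 2) n1 n2 n3 eqxx.
Qed.

Lemma periods_dvdn_2p2 m1 m2 m3 :
    2 <= m1 -> 2 <= m2 -> 2 <= m3 ->
    m1 %| 2 * p ^ 2 -> m2 %| 2 * p ^ 2 -> m3 %| 2 * p ^ 2 ->
    odd m1 + odd m2 + odd m3 = 1 ->
    ~~ ((m1 %| 2 * p) && (m2 %| 2 * p)) -> ~~ ((m2 %| 2 * p) && (m3 %| 2 * p)) ->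
    ~~ ((m3 %| 2 * p) && (m1 %| 2 * p)) ->
  [\/ perm_eq [:: m1; m2; m3] [:: 2; p ^ 2; 2 * p ^ 2],
      perm_eq [:: m1; m2; m3] [:: 2 * p ^ 2; 2 * p ^ 2; p],
      perm_eq [:: m1; m2; m3] [:: 2 * p ^ 2; 2 * p ^ 2; p ^ 2] |
      perm_eq [:: m1; m2; m3] [:: 2 * p; p ^ 2; 2 * p ^ 2]].
Proof.
have p3 : 2 < p := odd_prime_gt2 odd_p p_pr.
have p2_2p : p ^ 2 %| 2 * p = false by apply/negP => /dvdn_leq; lia.
have p2_2p2 : 2 * p ^ 2 %| 2 * p = false by apply/negP => /dvdn_leq; lia.
have two_2p : 2 %| 2 * p by rewrite dvdn_mulr.
have p_2p : p %| 2 * p by rewrite dvdn_mull.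
move=> + + + /dvdn_2p2_cases h1 /dvdn_2p2_cases h2 /dvdn_2p2_cases h3.
(* Of the 125 candidate triples only the 18 admissible ones survive the
   rewriting; [constructor] backtracks until it hits the matching signature. *)
move=> /h1[|[|[|[]]]] -> /h2[|[|[|[]]]] -> /h3[|[|[|[]]]] ->;
  rewrite ?p2_2p ?p2_2p2 ?dvdnn ?two_2p ?p_2p ?andbF ?oddM ?oddX ?odd_p //= => ? ? ? ? //;
  by constructor; apply/seq.permP => P /=; ring.
Qed.

End DoubledPrimePowers.

Lemma genus_le1_of_two_periods2 g n m1 m2 m3 :
    2 <= (m1 == 2) + (m2 == 2) + (m3 == 2) ->
    ((2 * g)%:R - 2 = n%:R * (1 - m1%:R^-1 - m2%:R^-1 - m3%:R^-1) :> rat)%R ->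
  g <= 1.
Proof.
move=> two2 RH; rewrite leqNgt; apply/negP => g2.
have g4 : (4 <= (2 * g)%:R :> rat)%R by rewrite (ler_nat _ 4); lia.
have n0 : (0 <= n%:R :> rat)%R := ler0n _ n.
have inv0 m : (0 <= m%:R^-1 :> rat)%R by rewrite invr_ge0 ler0n.
have half : (2%:R^-1 + 2%:R^-1 = 1 :> rat)%R by [].
have := inv0 m1; have := inv0 m2; have := inv0 m3.
by move: two2 RH; do 3 case: eqP => [->|_]; rewrite //= => _ RH *; nra.
Qed.

Section GroupElements.

Local Open Scope group_scope.

Variable gT : finGroupType.
Implicit Types (a b t x y : gT).

Lemma mem_join_cycles a b y :
  commute a b -> y \in <[a]> <*> <[b]> -> exists i k, y = a ^+ i * b ^+ k.
Proof.
move=> ab; rewrite cent_joinEr; last exact: cents_cycle (commute_sym ab).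
by case/mulsgP => _ _ /cycleP[i ->] /cycleP[k ->] ->; exists i, k.
Qed.

Lemma expg_join_cycles a b n y :
  commute a b -> a ^+ n = 1 -> b ^+ n = 1 -> y \in <[a]> <*> <[b]> -> y ^+ n = 1.
Proof.
move=> ab an bn /(mem_join_cycles ab)[i [k ->]].
rewrite expgMn; last exact: commuteX2.
by rewrite -!expgnA !(mulnC _ n) !expgnA an bn !expg1n mulg1.
Qed.

Lemma mulg_inverted_sqr t x : t ^+ 2 = 1 -> x ^ t = x^-1 -> (x * t) ^+ 2 = 1.
Proof.
move=> t2 xt; have tV : t^-1 = t by apply/eqP; rewrite eq_invg_mul -expg2 t2.
have tx : t * (x * t) = x ^ t by rewrite conjgE tV.
by rewrite expg2 -mulgA tx xt mulgV.
Qed.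

Lemma cycle_normsV a b : a ^ b = a^-1 -> <[b]> \subset 'N(<[a]>).
Proof. by move=> ab; rewrite cycle_subG inE -cycleJ ab cycleV. Qed.

Lemma expg_pair (aT bT : finGroupType) (u : aT * bT) k : u ^+ k = (u.1 ^+ k, u.2 ^+ k).
Proof. by elim: k => // k IHk; rewrite !expgS IHk. Qed.

End GroupElements.

Section GeneratingTriples.

Local Open Scope group_scope.

Variable gT : finGroupType.
Implicit Types (G H : {group gT}) (x y u v w : gT).

Definition gen_triple (G : {set gT}) (y1 y2 y3 : gT) :=
  [/\ [/\ y1 \in G, y2 \in G & y3 \in G], <<[set y1; y2; y3]>> = G & y1 * y2 * y3 = 1].

Lemma gen_triple_rot G (y1 y2 y3 : gT) :
  gen_triple G y1 y2 y3 -> gen_triple G y2 y3 y1.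
Proof.
case=> [[G1 G2 G3] genG prod1]; split=> //.
  by rewrite -genG; congr <<_>>; apply/setP => x; rewrite !inE orbC orbA.
by move/(congr1 (conjg^~ y1)): prod1; rewrite conj1g conjgE -!mulgA mulKg.
Qed.

Lemma gen_triple_joinE G (y1 y2 y3 : gT) :
  gen_triple G y1 y2 y3 -> G :=: <[y1]> <*> <[y2]>.
Proof.
case=> [[G1 G2 G3] <- prod1].
have y3E : y3 = (y1 * y2)^-1 by apply/eqP; rewrite eq_sym eq_invg_mul prod1.
have y1J : y1 \in <[y1]> <*> <[y2]> := subsetP (joing_subl _ _) _ (cycle_id y1).
have y2J : y2 \in <[y1]> <*> <[y2]> := subsetP (joing_subr _ _) _ (cycle_id y2).
apply/eqP; rewrite eqEsubset gen_subG join_subG !cycle_subG.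
rewrite !mem_gen ?inE ?eqxx ?orbT // !andbT.
apply/subsetP => x; rewrite !inE -orbA => /or3P[] /eqP->;
  by rewrite ?y3E ?groupV ?groupM.
Qed.

Lemma card2_nontrivial_eq H x y :
  #|H| = 2 -> x \in H -> y \in H -> x != 1 -> y != 1 -> x = y.
Proof.
move=> H2 Hx Hy x1 y1; have H1x : [set 1; x] = H.
  by apply/eqP; rewrite eqEcard subUset !sub1set group1 Hx H2 cards2 eq_sym x1.
by move: Hy; rewrite -H1x !inE (negPf y1) => /eqP.
Qed.

Lemma gen_triple_card2 H u v w :
  #|H| = 2 -> gen_triple H u v w -> (u != 1) + (v != 1) + (w != 1) = 2.
Proof.
move=> H2 [[Hu Hv Hw] genH prod1].
have not_all1 : ~ [/\ u = 1, v = 1 & w = 1].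
  case=> u1 v1 w1; move: H2.
  by rewrite -genH u1 v1 w1 !setUid gen_set_id ?cards1 // group_set_one.
have not_none1 : ~ [/\ u != 1, v != 1 & w != 1].
  case=> u1 v1 w1; have uu : u ^+ 2 = 1 by rewrite -H2 expg_cardG.
  move: prod1; rewrite -(card2_nontrivial_eq H2 Hu Hv u1 v1).
  rewrite -(card2_nontrivial_eq H2 Hu Hw u1 w1) -expg2 uu mul1g => u1'.
  by rewrite u1' eqxx in u1.
move: prod1 not_all1 not_none1.
case: (eqVneq u 1) => [->|u1]; case: (eqVneq v 1) => [->|v1];
  case: (eqVneq w 1) => [->|w1]; rewrite ?mul1g ?mulg1 => prod1 NA NN //;
  by [case: NA | case: NN | rewrite prod1 eqxx in u1 | rewrite prod1 eqxx in v1
     | rewrite prod1 eqxx in w1].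
Qed.

Lemma gen_triple_cyclic_dvdn G (y1 y2 y3 : gT) n :
  cyclic G -> gen_triple G y1 y2 y3 -> y1 ^+ n = 1 -> y2 ^+ n = 1 -> #|G| %| n.
Proof.
move=> cG T y1n y2n; have [[G1 G2 _] _ _] := T.
have y12 : commute y1 y2 := centsP (cyclic_abelian cG) y1 G1 y2 G2.
rewrite -exponent_cyclic //; apply/exponentP => y.
by rewrite (gen_triple_joinE T); apply: expg_join_cycles.
Qed.

End GeneratingTriples.

Section IndexTwoMorphism.

Local Open Scope group_scope.

Variables (gT rT : finGroupType) (G : {group gT}) (f : {morphism G >-> rT}).
Implicit Types (N : {group gT}) (x y t : gT).

Lemma gen_triple_morphim (y1 y2 y3 : gT) :
  gen_triple G y1 y2 y3 -> gen_triple (f @* G) (f y1) (f y2) (f y3).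
Proof.
case=> [[G1 G2 G3] genG prod1]; split; first by split; apply: mem_morphim.
  have -> : f @* G = f @* <<[set y1; y2; y3]>> by rewrite genG.
  rewrite morphim_gen; last by rewrite !subUset !sub1set G1 G2 G3.
  by rewrite !morphimU !morphim_set1.
by rewrite -!morphM ?groupM // prod1 morph1.
Qed.

Lemma morph_coprime_order y : y \in G -> coprime #[y] #|f @* G| -> f y = 1.
Proof.
move=> Gy co; apply/eqP; rewrite -order_eq1 -dvdn1 -(eqP co) dvdn_gcd.
by rewrite morph_order // order_dvdG ?mem_morphim.
Qed.

Lemma gen_triple_coprime_morphim (y1 y2 y3 : gT) :
  gen_triple G y1 y2 y3 -> coprime #[y1] #|f @* G| -> f @* G = <[f y2]>.
Proof.
move=> T co; have [[G1 _ _] _ _] := T.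
rewrite (gen_triple_joinE (gen_triple_morphim T)) morph_coprime_order //.
by rewrite cycle1 joing1G.
Qed.

Hypothesis f2 : #|f @* G| = 2.

Lemma morph_odd_expg1 q y : odd q -> y \in G -> y ^+ q = 1 -> f y = 1.
Proof.
move=> oq Gy yq; apply: morph_coprime_order => //; rewrite f2 coprimen2.
by apply: dvdn_odd oq; rewrite order_dvdn yq.
Qed.

Lemma index2_mul_cycle_decomp N t q y :
    odd q -> G :=: N * <[t]> -> {in N, forall x, x ^+ q = 1} -> y \in G ->
  exists x i, [/\ x \in N, y = x * t ^+ i & (f y == 1) = ~~ odd i].
Proof.
move=> oq GE Nq Gy; have NG : N \subset G by rewrite GE mulG_subl.
have tG : t \in G by rewrite GE; apply/mulsgP; exists 1 t; rewrite ?mul1g ?cycle_id.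
have fE z : z \in G -> exists x i, [/\ x \in N, z = x * t ^+ i & f z = f t ^+ i].
  move=> Gz; have /mulsgP[x _ Nx /cycleP[i ->] ->] : z \in N * <[t]> by rewrite -GE.
  have Gx : x \in G := subsetP NG x Nx.
  exists x, i; split=> //.
  by rewrite morphM ?groupX // morphX // (morph_odd_expg1 oq Gx (Nq x Nx)) mul1g.
have ft2 : #[f t] = 2.
  have ft1 : #[f t] != 1%N.
    rewrite order_eq1; apply/eqP => ft1; have : f @* G \subset [1].
      apply/subsetP => _ /morphimP[z _ Gz ->]; have [x [i [_ _ ->]]] := fE z Gz.
      by rewrite ft1 expg1n inE.
    by move/subset_leq_card; rewrite f2 cards1.
  by apply/(@prime_nt_dvdP _ 2 isT ft1); rewrite -f2 order_dvdG ?mem_morphim.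
have [x [i [Nx yE fy]]] := fE y Gy; exists x, i; split=> //.
by rewrite fy -order_dvdn ft2 dvdn2.
Qed.

Lemma index2_mul_cycle_ker N t q :
    odd q -> G :=: N * <[t]> -> {in N, forall x, x ^+ q = 1} ->
    {in N, forall x, commute x (t ^+ 2)} -> t ^+ (2 * q) = 1 ->
  {in G, forall y, f y = 1 -> y ^+ q = 1}.
Proof.
move=> oq GE Nq Nt2 tq y Gy fy.
have [x [i [Nx yE]]] := index2_mul_cycle_decomp oq GE Nq Gy.
rewrite fy eqxx => ei; have /dvdnP[j iE] : 2 %| i by rewrite dvdn2 -ei.
rewrite yE iE mulnC expgnA expgMn; last exact/commuteX/Nt2.
by rewrite Nq // expgnAC -(expgnA t 2 q) tq expg1n mulg1.
Qed.

Lemma index2_mul_involution_sqr N t q :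
    odd q -> G :=: N * <[t]> -> {in N, forall x, x ^+ q = 1} ->
    t ^+ 2 = 1 -> {in N, forall x, x ^ t = x^-1} ->
  {in G, forall y, f y != 1 -> y ^+ 2 = 1}.
Proof.
move=> oq GE Nq t2 Nt y Gy fy.
have [x [i [Nx yE]]] := index2_mul_cycle_decomp oq GE Nq Gy.
rewrite (negbTE fy) => /esym/negbFE oi.
by rewrite yE -(expg_mod _ t2) modn2 oi mulg_inverted_sqr ?Nt.
Qed.

Section KernelOfOddExponent.

Variable q : nat.
Hypotheses (oq : odd q) (ker_q : {in G, forall y, f y = 1 -> y ^+ q = 1}).

Lemma odd_order_morph y : y \in G -> odd #[y] = (f y == 1).
Proof.
move=> Gy; apply/idP/eqP => [oy | fy].
  by apply: morph_coprime_order; rewrite // f2 coprimen2.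
by apply: dvdn_odd oq; rewrite order_dvdn ker_q.
Qed.

Lemma index2_expg_double y : y \in G -> y ^+ (2 * q) = 1.
Proof.
by move=> Gy; rewrite expgnA ker_q ?groupX // morphX // -f2 expg_cardG ?mem_morphim.
Qed.

Lemma gen_triple_one_odd_order (y1 y2 y3 : gT) :
  gen_triple G y1 y2 y3 -> odd #[y1] + odd #[y2] + odd #[y3] = 1%N.
Proof.
move=> T; have := gen_triple_card2 f2 (gen_triple_morphim T).
by have [[G1 G2 G3] _ _] := T; rewrite !odd_order_morph //; lia.
Qed.

Lemma index2_involutions_genus_le1 g :
  {in G, forall y, f y != 1 -> y ^+ 2 = 1} -> acts_triangularly G g -> g <= 1.
Proof.
move=> inv2 [m1 [m2 [m3 [_ [y1 [y2 [y3 [[G1 G2 G3] genG prod1 [<- <- <- RH]]]]]]]]].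
have T : gen_triple G y1 y2 y3 by [].
have even2 y : y \in G -> odd #[y] || (#[y] == 2).
  move=> Gy; rewrite odd_order_morph //; case: eqP => //= /eqP fy.
  apply/eqP/(@prime_nt_dvdP _ 2 isT); last by rewrite order_dvdn inv2.
  by apply: contra fy; rewrite order_eq1 => /eqP->; rewrite morph1.
apply: (genus_le1_of_two_periods2 _ RH).
by have := gen_triple_one_odd_order T; have := even2 _ G1; have := even2 _ G2;
  have := even2 _ G3; lia.
Qed.

End KernelOfOddExponent.

Lemma index2_dihedral_genus_le1 N t q g :
    odd q -> G :=: N * <[t]> -> {in N, forall x, x ^+ q = 1} ->
    t ^+ 2 = 1 -> {in N, forall x, x ^ t = x^-1} ->
  acts_triangularly G g -> g <= 1.
Proof.
move=> oq GE Nq t2 Nt.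
have Nt2 : {in N, forall x, commute x (t ^+ 2)}.
  by move=> x _; rewrite t2; apply: commute1.
have t2q : t ^+ (2 * q) = 1 by rewrite expgnA t2 expg1n.
apply: (index2_involutions_genus_le1 oq (index2_mul_cycle_ker oq GE Nq Nt2 t2q)).
exact: index2_mul_involution_sqr oq GE Nq t2 Nt.
Qed.

End IndexTwoMorphism.

Section ZpTargets.

Local Open Scope group_scope.

Variable n : nat.
Hypothesis n_gt1 : 1 < n.

Lemma Zp_expg_dvd (x : 'Z_n) m : n %| m -> x ^+ m = 1.
Proof.
move=> nm; apply/eqP; rewrite -order_dvdn (dvdn_trans _ nm) //.
by rewrite -{2}(Zp_cast n_gt1) -(card_ord (Zp_trunc n).+2) -cardsT order_dvdG ?inE.
Qed.

Lemma Zp_pair_join : <[(Zp1 : 'Z_n, 1 : 'Z_n)]> <*> <[(1 : 'Z_n, Zp1 : 'Z_n)]> = setT.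
Proof.
have e1 : <[(Zp1 : 'Z_n, 1 : 'Z_n)]> = setX [set: 'Z_n] 1.
  by rewrite Zp_cycle -morphim_pairg1 morphim_cycle ?inE.
have e2 : <[(1 : 'Z_n, Zp1 : 'Z_n)]> = setX 1 [set: 'Z_n].
  by rewrite Zp_cycle -morphim_pair1g morphim_cycle ?inE.
apply/eqP; rewrite eqEsubset subsetT e1 e2.
have -> : [set: 'Z_n * 'Z_n] = setX [set: 'Z_n] 1 * setX 1 [set: 'Z_n].
  by rewrite setX_prod; apply/setP => -[x y]; rewrite !inE.
exact: mul_subG (joing_subl _ _) (joing_subr _ _).
Qed.

End ZpTargets.

Section PresentedGroups.

Local Open Scope group_scope.

Variables (gT : finGroupType) (G : {group gT}) (p g : nat).
Hypothesis odd_p : odd p.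

Lemma dihedral_p2_genus_le1 :
  G \isog Grp (a : b : (a ^+ (p ^ 2), b ^+ 2, a ^ b = a^-1)) ->
  acts_triangularly G g -> g <= 1.
Proof.
move=> isoG; have /homgP[f fG] : [set: 'Z_2] \homg G.
  rewrite isoG; apply/existsP; exists (1, Zp1); rewrite /= !xpair_eqE /=.
  rewrite cycle1 joing1G expg1n conj1g invg1 !eqxx !andbT.
  by rewrite eq_sym; apply/eqP; apply: Zp_cycle.
have f2 : #|f @* G| = 2 by rewrite fG cardsT card_ord.
have /existsP[[a b]] := isoGrp_hom isoG; rewrite /= !xpair_eqE /=.
case/and4P => /eqP GE /eqP a_p2 /eqP b2 /eqP ab.
have GE' : G :=: <[a]> * <[b]> by rewrite -GE norm_joinEr // cycle_normsV.
have oq : odd (p ^ 2) by rewrite oddX odd_p orbT.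
apply: (index2_dihedral_genus_le1 f2 oq GE' _ b2).
  by move=> _ /cycleP[i ->]; rewrite expgnAC a_p2 expg1n.
by move=> _ /cycleP[i ->]; rewrite conjXg ab expVgn.
Qed.

Lemma Zp2_semidirect_Z2_genus_le1 :
  G \isog Grp (a : b : c : (a ^+ p, b ^+ p, c ^+ 2,
                            a ^ c = a^-1, b ^ c = b^-1, [~ a, b] = 1)) ->
  acts_triangularly G g -> g <= 1.
Proof.
move=> isoG; have /homgP[f fG] : [set: 'Z_2] \homg G.
  rewrite isoG; apply/existsP; exists (1, 1, Zp1); rewrite /= !xpair_eqE /=.
  rewrite !cycle1 !joing1G !expg1n comm1g !eqxx !andbT.
  by rewrite eq_sym; apply/eqP; apply: Zp_cycle.
have f2 : #|f @* G| = 2 by rewrite fG cardsT card_ord.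
have /existsP[[[a b] c]] := isoGrp_hom isoG; rewrite /= !xpair_eqE /=.
case/and5P => /eqP GE /eqP a_p /eqP b_p /eqP c2 /and3P[/eqP ac /eqP bc /commgP ab].
have GE' : G :=: (<[a]> <*> <[b]>) * <[c]>.
  by rewrite -GE norm_joinEr // normsY ?cycle_normsV.
have Nq := fun x => expg_join_cycles (y := x) ab a_p b_p.
apply: (index2_dihedral_genus_le1 f2 odd_p GE' Nq c2).
move=> _ /(mem_join_cycles ab)[i [k ->]].
by rewrite conjMg !conjXg ac bc !expVgn -!invMg (commuteX2 i k ab).
Qed.

Lemma Z2p_Zp_periods m1 m2 m3 :
    prime p -> G \isog Grp (a : b : (a ^+ (2 * p), b ^+ p, [~ a, b] = 1)) ->
    triangular_sig G g m1 m2 m3 ->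
  perm_eq [:: m1; m2; m3] [:: (2 * p)%N; (2 * p)%N; p].
Proof.
move=> p_pr isoG; have p_gt1 := prime_gt1 p_pr.
have /homgP[f fG] : [set: 'Z_2] \homg G.
  rewrite isoG; apply/existsP; exists (Zp1, 1); rewrite /= !xpair_eqE /=.
  rewrite cycle1 joingG1 expg1n commg1 !eqxx !andbT Zp_expg_dvd ?dvdn_mulr //.
  by rewrite eqxx andbT eq_sym; apply/eqP; apply: Zp_cycle.
have f2 : #|f @* G| = 2 by rewrite fG cardsT card_ord.
have /homgP[phi phiG] : [set: 'Z_p * 'Z_p] \homg G.
  rewrite isoG; apply/existsP; exists ((Zp1, 1), (1, Zp1)); rewrite /= !xpair_eqE /=.
  rewrite Zp_pair_join // !expg_pair /= !expg1n !Zp_expg_dvd ?dvdn_mull //=.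
  by rewrite invg1 !mulg1 !mul1g !mulVg !eqxx.
have phi_card : #|phi @* G| = (p * p)%N.
  by rewrite phiG cardsT card_prod card_ord Zp_cast.
have /existsP[[a b]] := isoGrp_hom isoG; rewrite /= !xpair_eqE /=.
case/and4P => /eqP GE /eqP a_2p /eqP b_p /commgP ab.
have GE' : G :=: <[b]> * <[a]>.
  by rewrite -GE joingC cent_joinEr // cents_cycle.
have ker_p : {in G, forall y, f y = 1 -> y ^+ p = 1}.
  apply: (index2_mul_cycle_ker f2 odd_p GE' _ _ a_2p) => _ /cycleP[i ->].
    by rewrite expgnAC b_p expg1n.
  exact/commuteX2/commute_sym.
have order_ne2 y1 y2 y3 : gen_triple G y1 y2 y3 -> #[y1] != 2.
  move=> T; apply/eqP => o2; have := gen_triple_coprime_morphim (f := phi) T.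
  rewrite phi_card o2 coprime2n oddM odd_p => /(_ isT) phiE.
  have : (p * p)%N %| p.
    by rewrite -phi_card phiE -orderE order_dvdn expg_pair !Zp_expg_dvd.
  by move/dvdn_leq; lia.
case=> [[m1_2 m2_2 m3_2] [y1 [y2 [y3 [[G1 G2 G3] genG prod1 [o1 o2 o3 _]]]]]].
subst m1 m2 m3; have T : gen_triple G y1 y2 y3 by [].
have T2 := gen_triple_rot T; have T3 := gen_triple_rot T2.
have dvd_2p y : y \in G -> #[y] %| 2 * p.
  by move=> Gy; rewrite order_dvdn (index2_expg_double f2 ker_p).
apply: (periods_dvdn_2p_ne2 p_pr odd_p) (dvd_2p _ G1) (dvd_2p _ G2) (dvd_2p _ G3)
  _ _ _ _ => //.
- exact: (gen_triple_one_odd_order f2 odd_p ker_p T).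
- exact: order_ne2 _ _ _ T.
- exact: order_ne2 _ _ _ T2.
- exact: order_ne2 _ _ _ T3.
Qed.

Lemma Dp_Zp_periods m1 m2 m3 :
    prime p ->
    G \isog Grp (a : b : c : (a ^+ p, b ^+ 2, c ^+ p, a ^ b = a^-1,
                             [~ a, c] = 1, [~ b, c] = 1)) ->
    triangular_sig G g m1 m2 m3 ->
  perm_eq [:: m1; m2; m3] [:: (2 * p)%N; (2 * p)%N; p] \/
  perm_eq [:: m1; m2; m3] [:: 2; p; (2 * p)%N].
Proof.
move=> p_pr isoG; have p_gt1 := prime_gt1 p_pr.
have /homgP[f fG] : [set: 'Z_2] \homg G.
  rewrite isoG; apply/existsP; exists (1, Zp1, 1); rewrite /= !xpair_eqE /=.
  rewrite !cycle1 joing1G joingG1 !expg1n commg1 !eqxx !andbT.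
  by rewrite eq_sym; apply/eqP; apply: Zp_cycle.
have f2 : #|f @* G| = 2 by rewrite fG cardsT card_ord.
have /homgP[psi psiG] : [set: 'Z_p] \homg G.
  rewrite isoG; apply/existsP; exists (1, 1, Zp1); rewrite /= !xpair_eqE /=.
  rewrite !cycle1 !joing1G !expg1n Zp_expg_dvd // conj1g invg1 comm1g !eqxx !andbT.
  by rewrite eq_sym; apply/eqP; apply: Zp_cycle.
have psi_card : #|psi @* G| = p by rewrite psiG cardsT card_ord Zp_cast.
have /existsP[[[a b] c]] := isoGrp_hom isoG; rewrite /= !xpair_eqE /=.
case/and5P => /eqP GE /eqP a_p /eqP b2 /eqP c_p /and3P[/eqP ab /commgP ac /commgP bc].
have GE' : G :=: (<[a]> <*> <[c]>) * <[b]>.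
  rewrite -GE -joingA (joingC <[b]>) joingA norm_joinEr //.
  rewrite normsY ?(cycle_normsV ab) //.
  exact: cents_norm (cents_cycle bc).
have b2p : b ^+ (2 * p) = 1 by rewrite expgnA b2 expg1n.
have ker_p : {in G, forall y, f y = 1 -> y ^+ p = 1}.
  have Nq := fun x => expg_join_cycles (y := x) ac a_p c_p.
  apply: (index2_mul_cycle_ker f2 odd_p GE' Nq _ b2p).
  by move=> x _; rewrite b2; apply: commute1.
have orders_ne2 y1 y2 y3 : gen_triple G y1 y2 y3 -> ~~ ((#[y1] == 2) && (#[y2] == 2)).
  move=> T; apply/negP => /andP[/eqP o1 /eqP o2]; have [[_ G2 _] _ _] := T.
  have co2 : coprime 2 #|psi @* G| by rewrite psi_card coprime2n.
  have := gen_triple_coprime_morphim (f := psi) T; rewrite o1 => /(_ co2).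
  rewrite (morph_coprime_order (f := psi) G2) ?o2 // cycle1 => psi1.
  by move: psi_card; rewrite psi1 cards1 => p1; rewrite -p1 in p_gt1.
case=> [[m1_2 m2_2 m3_2] [y1 [y2 [y3 [[G1 G2 G3] genG prod1 [o1 o2 o3 _]]]]]].
subst m1 m2 m3; have T : gen_triple G y1 y2 y3 by [].
have T2 := gen_triple_rot T; have T3 := gen_triple_rot T2.
have dvd_2p y : y \in G -> #[y] %| 2 * p.
  by move=> Gy; rewrite order_dvdn (index2_expg_double f2 ker_p).
apply: (periods_dvdn_2p p_pr odd_p) (dvd_2p _ G1) (dvd_2p _ G2) (dvd_2p _ G3)
  _ _ _ _ => //.
- exact: (gen_triple_one_odd_order f2 odd_p ker_p T).
- exact: orders_ne2 _ _ _ T.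
- exact: orders_ne2 _ _ _ T2.
- exact: orders_ne2 _ _ _ T3.
Qed.

End PresentedGroups.

Section CyclicGroup.

Local Open Scope group_scope.

Lemma cyclic_2p2_periods (gT : finGroupType) (G : {group gT}) p g m1 m2 m3 :
    prime p -> odd p -> cyclic G -> #|G| = (2 * p ^ 2)%N ->
    triangular_sig G g m1 m2 m3 ->
  [\/ perm_eq [:: m1; m2; m3] [:: 2; (p ^ 2)%N; (2 * p ^ 2)%N],
      perm_eq [:: m1; m2; m3] [:: (2 * p ^ 2)%N; (2 * p ^ 2)%N; p],
      perm_eq [:: m1; m2; m3] [:: (2 * p ^ 2)%N; (2 * p ^ 2)%N; (p ^ 2)%N] |
      perm_eq [:: m1; m2; m3] [:: (2 * p)%N; (p ^ 2)%N; (2 * p ^ 2)%N]].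
Proof.
move=> p_pr odd_p cG cardG; have [z zE] := cyclicP cG.
have {zE} GE : G = <[z]>%G by apply: val_inj.
rewrite GE in cG cardG *.
have p_gt0 := prime_gt0 p_pr; have p_gt1 := prime_gt1 p_pr.
have oz : #[z] = (2 * p ^ 2)%N by rewrite orderE cardG.
pose f := cyclem_morphism z (p ^ 2)%N.
have f2 : #|f @* <[z]>| = 2.
  rewrite morphim_cycle ?cycle_id // -orderE /= /cyclem orderXgcd oz.
  by rewrite (gcdn_idPr (dvdn_mull 2 (dvdnn (p ^ 2)))) mulnK // expn_gt0 p_gt0.
have ker_p2 : {in <[z]>, forall y, f y = 1 -> y ^+ (p ^ 2)%N = 1} by [].
have odd_p2 : odd (p ^ 2)%N by rewrite oddX odd_p orbT.
have orders_2p y1 y2 y3 :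
    gen_triple <[z]> y1 y2 y3 -> ~~ ((#[y1] %| 2 * p)%N && (#[y2] %| 2 * p)%N).
  move=> T; apply/negP => /andP[]; rewrite !order_dvdn => /eqP y1_2p /eqP y2_2p.
  have := gen_triple_cyclic_dvdn cG T y1_2p y2_2p.
  by rewrite cardG => /dvdn_leq; rewrite muln_gt0 p_gt0 => /(_ isT); nia.
case=> [[m1_2 m2_2 m3_2] [y1 [y2 [y3 [[G1 G2 G3] genG prod1 [o1 o2 o3 _]]]]]].
subst m1 m2 m3; have T : gen_triple <[z]> y1 y2 y3 by [].
have T2 := gen_triple_rot T; have T3 := gen_triple_rot T2.
have dvd_2p2 y : y \in <[z]> -> (#[y] %| 2 * p ^ 2)%N.
  by rewrite -cardG; apply: order_dvdG.
apply: (periods_dvdn_2p2 p_pr odd_p) (dvd_2p2 _ G1) (dvd_2p2 _ G2) (dvd_2p2 _ G3)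
  _ _ _ _ => //.
- exact: (gen_triple_one_odd_order f2 odd_p2 ker_p2 T).
- exact: orders_2p _ _ _ T.
- exact: orders_2p _ _ _ T2.
- exact: orders_2p _ _ _ T3.
Qed.

End CyclicGroup.

Theorem lemma1 (p g : nat) (hp : prime p) (hp3 : 3 <= p) (hg : 2 <= g) :
  [/\
   (* (1) *)
   (forall (gT : finGroupType) (G : {group gT}),
       (G \isog Grp (a : b : (a ^+ (p ^ 2), b ^+ 2, a ^ b = a^-1)))%g ->
       ~ acts_triangularly G g) /\
   (forall (gT : finGroupType) (G : {group gT}),
       (G \isog Grp (a : b : c : (a ^+ p, b ^+ p, c ^+ 2,
                                   a ^ c = a^-1, b ^ c = b^-1, [~ a, b] = 1)))%g ->
       ~ acts_triangularly G g),
   (* (2) Z_{2p} x Z_p *)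
   (forall (gT : finGroupType) (G : {group gT}) (m1 m2 m3 : nat),
       (G \isog Grp (a : b : (a ^+ (2 * p), b ^+ p, [~ a, b] = 1)))%g ->
       triangular_sig G g m1 m2 m3 ->
       perm_eq [:: m1; m2; m3] [:: 2 * p; 2 * p; p]),
   (* (3) D_p x Z_p *)
   (forall (gT : finGroupType) (G : {group gT}) (m1 m2 m3 : nat),
       (G \isog Grp (a : b : c : (a ^+ p, b ^+ 2, c ^+ p, a ^ b = a^-1,
                                   [~ a, c] = 1, [~ b, c] = 1)))%g ->
       triangular_sig G g m1 m2 m3 ->
       perm_eq [:: m1; m2; m3] [:: 2 * p; 2 * p; p] \/
       perm_eq [:: m1; m2; m3] [:: 2; p; 2 * p]) &
   (* (4) Z_{2p^2} *)
   (forall (gT : finGroupType) (G : {group gT}) (m1 m2 m3 : nat),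
       cyclic G -> #|G| = 2 * p ^ 2 ->
       triangular_sig G g m1 m2 m3 ->
       [\/ perm_eq [:: m1; m2; m3] [:: 2; p ^ 2; 2 * p ^ 2],
           perm_eq [:: m1; m2; m3] [:: 2 * p ^ 2; 2 * p ^ 2; p],
           perm_eq [:: m1; m2; m3] [:: 2 * p ^ 2; 2 * p ^ 2; p ^ 2] |
           perm_eq [:: m1; m2; m3] [:: 2 * p; p ^ 2; 2 * p ^ 2]])].
Proof.
have odd_p : odd p by case: (even_prime hp) => // p2; rewrite p2 in hp3.
split; first split.
- by move=> gT G isoG /(dihedral_p2_genus_le1 odd_p isoG); rewrite leqNgt hg.
- by move=> gT G isoG /(Zp2_semidirect_Z2_genus_le1 odd_p isoG); rewrite leqNgt hg.
- by move=> gT G m1 m2 m3; apply: Z2p_Zp_periods.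
- by move=> gT G m1 m2 m3; apply: Dp_Zp_periods.
- by move=> gT G m1 m2 m3; apply: cyclic_2p2_periods.
Qed.
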